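(* Let $r\ge1$ and $m\in\{0,1,\dots,5\}$, and let $A=6r^2+2mr+(m-2)\mathbb 1_{\{m>0\}}$. Then every polyiamond of area $A$ whose edge-perimeter is minimal among polyiamonds of area $A$ is a quasi-regular hexagon.
   Context: Faces are the closed triangular faces of the triangular lattice $\mathbb T^2$ in $\mathbb R^2$. A polyiamond $P$ is a finite nonempty union of faces that is connected through shared edges (two faces sharing only a vertex are not adjacent); faces not in $P$ are empty faces. Its area $\|P\|$ is the number of its faces; its edge-perimeter $p(P)$ is the number of edges of $\mathbb T^2$ separating a face of $P$ from an empty face; its site-perimeter $s(P)$ is the number of empty faces sharing at least one edge with a face of $P$. For integers $d\ge1$, $a,b,c\ge0$ with $a+b,b+c,c+a\le d$, $T^d_{a,b,c}$ is the polyiamond obtained from an equilateral triangle of side length $d$ with sides on lattice lines (the union of its $d^2$ faces) by removing the equilateral sub-triangles of side lengths $a,b,c$ at its three corners; its boundary is a (possibly degenerate) hexagon with side lengths, in cyclic order, $a,\ d-a-b,\ b,\ d-b-c,\ c,\ d-c-a$, its area is $d^2-a^2-b^2-c^2$ and its edge- and site-perimeter equal $3d-a-b-c$. Quasi-regular hexagons: for $r\ge1$ let $E(r)=T^{3r}_{r,r,r}$ (regular hexagon of side $r$), $E_{B_1}(r)=T^{3r}_{r-1,r,r}$, $E_{B_2}(r)=T^{3r+1}_{r,r,r+1}$, $E_{B_3}(r)=T^{3r+1}_{r,r,r}$, $E_{B_4}(r)=T^{3r+2}_{r,r+1,r+1}$, $E_{B_5}(r)=T^{3r+2}_{r,r,r+1}$.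 Their areas are $6r^2,\ 6r^2+2r-1,\ 6r^2+4r,\ 6r^2+6r+1,\ 6r^2+8r+2,\ 6r^2+10r+3$, and their edge-perimeters are $6r,6r+1,\dots,6r+5$. A quasi-regular hexagon is any image of one of these under a symmetry (translation, rotation, reflection) of $\mathbb T^2$; $\mathcal Q$ denotes the set of all quasi-regular hexagons. *)

From mathcomp Require Import all_boot all_order all_algebra.
From mathcomp Require Import finmap.
Set Implicit Arguments. Unset Strict Implicit. Unset Printing Implicit Defensive.
Import Order.TTheory GRing.Theory Num.Theory.
Local Open Scope fset_scope.

(* Vertices of T^2 are the integer
   combinations x*e1 + y*e2 of two unit vectors at 60 degrees.
   (x, y, true)  = up   face with vertices (x,y), (x+1,y), (x,y+1);
   (x, y, false) = down face with vertices (x+1,y), (x,y+1), (x+1,y+1). *)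
Definition face : Type := (int * int * bool)%type.

Definition upf (x y : int) : face := (x, y, true).
Definition dnf (x y : int) : face := (x, y, false).

Definition neighbors (f : face) : seq face :=
  let: (x, y, o) := f in
  if o then [:: dnf x y; dnf (x - 1)%R y; dnf x (y - 1)%R]
  else [:: upf x y; upf (x + 1)%R y; upf x (y + 1)%R].

Definition adj (f g : face) : bool := g \in neighbors f.

Definition edge_connected (P : {fset face}) : Prop :=
  forall f g, f \in P -> g \in P ->
    exists s : seq face, [/\ path adj f s, last f s = g & all (fun h => h \in P) s].

Definition polyiamond (P : {fset face}) : Prop := P != fset0 /\ edge_connected P.

Definition area (P : {fset face}) : nat := #|` P|.

(* Edge-perimeter: number of lattice edges separating a face of P from an empty
   face.  Every edge borders exactly two faces (which are neighbors), so such an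
   edge is counted exactly once below, from its side lying in P. *)
Definition edge_perimeter (P : {fset face}) : nat :=
  \sum_(f <- P) count (fun g => g \notin P) (neighbors f).

(* T^d_{a,b,c}: the triangle with vertices (0,0), (d,0), (0,d) minus the corner
   triangles of side a (at (0,0)), b (at (d,0)) and c (at (0,d)). *)
Definition inT (d a b c : nat) (i j : nat) (o : bool) : bool :=
  let s := (i + j + (if o then 1 else 2))%N in
  [&& s <= d, ~~ (s <= a), i < d - b & j < d - c].

Definition Tface_seq (d a b c : nat) : seq face :=
  flatten [seq flatten [seq [seq ((Posz i, Posz j, o) : face)
                               | o <- [:: true; false] & inT d a b c i j o]
                       | j <- iota 0 d]
          | i <- iota 0 d].

Definition Tset (d a b c : nat) : {fset face} := [fset f | f in Tface_seq d a b c].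

(* Symmetries of T^2: rotation by 60 degrees about the vertex (0,0),
   reflection in the line y = x, translations by lattice vectors. *)
Definition rot (f : face) : face :=
  let: (x, y, o) := f in
  if o then dnf (- y - 1)%R (x + y)%R else upf (- y - 1)%R (x + y + 1)%R.
Definition refl (f : face) : face := let: (x, y, o) := f in (y, x, o).
Definition transl (s t : int) (f : face) : face :=
  let: (x, y, o) := f in ((x + s)%R, (y + t)%R, o).

Definition lattice_sym (n : nat) (b : bool) (s t : int) (f : face) : face :=
  transl s t (iter n rot (if b then refl f else f)).

Definition qrhex (r k : nat) : {fset face} :=
  match k with
  | 0 => Tset (3 * r) r r r
  | 1 => Tset (3 * r) r.-1 r r
  | 2 => Tset (3 * r).+1 r r r.+1
  | 3 => Tset (3 * r).+1 r r r
  | 4 => Tset (3 * r).+2 r r.+1 r.+1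
  | _ => Tset (3 * r).+2 r r r.+1
  end.

Definition quasi_regular (P : {fset face}) : Prop :=
  exists r k n b s t, [/\ (1 <= r)%N, (k <= 5)%N &
    P = [fset lattice_sym n b s t f | f in qrhex r k]].

Definition min_perimeter_polyiamond (A : nat) (P : {fset face}) : Prop :=
  [/\ polyiamond P, area P = A &
      forall Q, polyiamond Q -> area Q = A -> (edge_perimeter P <= edge_perimeter Q)%N].

(* A = 6 r^2 + 2 m r + (m - 2) * 1_{m > 0}; for m > 0 this is >= 7, so the
   natural-number subtraction below never truncates. *)
Definition areaA (r m : nat) : nat :=
  if m == 0%N then (6 * r ^ 2)%N else (6 * r ^ 2 + 2 * m * r + m - 2)%N.

Example test_E1 : size (Tface_seq 3 1 1 1) = 6%N. Proof. by vm_compute. Qed.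
Example test_EB5 : size (Tface_seq 5 1 1 2) = 19%N. Proof. by vm_compute. Qed.
Example test_EB1_2 : size (Tface_seq 6 1 2 2) = 27%N. Proof. by vm_compute. Qed.

From Pilot Require Import Defs.
From mathcomp Require Import all_boot all_order all_algebra.
From mathcomp Require Import finmap zify ring.
Set Implicit Arguments. Unset Strict Implicit. Unset Printing Implicit Defensive.
Import Order.TTheory GRing.Theory Num.Theory.
Local Open Scope ring_scope.

(* Each face lies in one strip of each of the three families of parallel lattice lines.
   1. Every boundary edge is an end of exactly two strip runs, so twice the perimeter of a
      set S is the number of ends of its strips; a strip meeting S has at least two ends.
      A connected S meets every strip between its extreme ones, hence its perimeter is at
      least the number of strips of its bounding box (the smallest hexagonal box around it),
      and a box, being convex along strips, has exactly that perimeter.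
   2. Counting column by column, a box whose hexagon is T^d_{a,b,c} has d^2-a^2-b^2-c^2
      faces, and any subset of it at most that many.  The sets T^d_{a,b,c} are boxes and
      are polyiamonds.
   3. Arithmetic: (3d-a-b-c)^2 - 6(d^2-a^2-b^2-c^2) is a positive combination of squares
      of d-a-b-c, a-b, b-c; hence a hexagon of perimeter at most 6r+m and area at least A
      is, up to a symmetry of its side sequence, the quasi-regular hexagon E_{B_m}(r).
   For a minimizer P, comparison with E_{B_m}(r) gives p(P) <= 6r+m.  Its bounding box then
   has perimeter <= 6r+m and area >= A, so by 3 it is an image of E_{B_m}(r) under a lattice
   symmetry (symmetries act on boxes by permuting sides); having the same area as P and
   containing it, it equals P. *)

(* Each family of parallel lattice lines cuts the
   plane into strips; a face lies in one strip of each family.  The neighbour across the edge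
   lying on a Z-line (resp. X-line, Y-line) is nZ f (resp. nX f, nY f). *)
Definition fX (f : face) : int := f.1.1.
Definition fY (f : face) : int := f.1.2.
Definition fZ (f : face) : int := f.1.1 + f.1.2 + (if f.2 then 0 else 1).

Definition nZ (f : face) : face :=
  let: (x, y, o) := f in if o then dnf x y else upf x y.
Definition nX (f : face) : face :=
  let: (x, y, o) := f in if o then dnf (x - 1) y else upf (x + 1) y.
Definition nY (f : face) : face :=
  let: (x, y, o) := f in if o then dnf x (y - 1) else upf x (y + 1).

Lemma neighborsE (f : face) : neighbors f = [:: nZ f; nX f; nY f].
Proof. by case: f => [[x y] []]. Qed.

Lemma fZ_bounds (f : face) : fX f + fY f <= fZ f <= fX f + fY f + 1.
Proof. case: f => [[x y] []]; rewrite /fX /fY /fZ /=; lia. Qed.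

(* Inside the strip [strip k f] of direction k, faces are
   linearly ordered by [pos k f]; [fwd k f] and [bwd k f] are the two neighbours of f in
   its strip, at positions one higher and one lower. *)
Inductive dir := DX | DY | DZ.

Definition strip (k : dir) (f : face) : int :=
  match k with DX => fX f | DY => fY f | DZ => fZ f end.
Definition pos (k : dir) (f : face) : int :=
  match k with DX => fY f + fZ f | DY => fX f + fZ f | DZ => fX f - fY f end.
Definition fwd (k : dir) (f : face) : face :=
  match k with
  | DX => if f.2 then nZ f else nY f
  | DY => if f.2 then nZ f else nX f
  | DZ => if f.2 then nY f else nX f end.
Definition bwd (k : dir) (f : face) : face :=
  match k with
  | DX => if f.2 then nY f else nZ f
  | DY => if f.2 then nX f else nZ f
  | DZ => if f.2 then nX f else nY f end.

Lemma strip_fwd k f : strip k (fwd k f) = strip k f.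
Proof. case: k; case: f => [[x y] []]; rewrite /= /fX /fY /fZ /=; lia. Qed.
Lemma strip_bwd k f : strip k (bwd k f) = strip k f.
Proof. case: k; case: f => [[x y] []]; rewrite /= /fX /fY /fZ /=; lia. Qed.
Lemma pos_fwd k f : pos k (fwd k f) = pos k f + 1.
Proof. case: k; case: f => [[x y] []]; rewrite /= /fX /fY /fZ /=; lia. Qed.
Lemma pos_bwd k f : pos k (bwd k f) = pos k f - 1.
Proof. case: k; case: f => [[x y] []]; rewrite /= /fX /fY /fZ /=; lia. Qed.

Lemma strip_pos_inj k f g : strip k f = strip k g -> pos k f = pos k g -> f = g.
Proof.
case: k; case: f => [[x y] o]; case: g => [[x' y'] o'];
  case: o; case: o'; rewrite /= /fX /fY /fZ /= => h1 h2;
  (have [-> ->] : x = x' /\ y = y' by lia) => //; exfalso; lia.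
Qed.

Lemma adj_strip k f g : adj f g -> strip k f - 1 <= strip k g <= strip k f + 1.
Proof.
rewrite /adj neighborsE !inE => /or3P [] /eqP ->;
  case: k; case: f => [[x y] []]; rewrite /= /fX /fY /fZ /=; lia.
Qed.

Definition strip_ends k (S : {fset face}) f : nat :=
  ((fwd k f \notin S) + (bwd k f \notin S))%N.

(* Each of the three neighbours of a face is its strip neighbour in exactly two directions,
   so every boundary edge is counted twice by the strip ends of the three directions. *)
Lemma perimeter_strip_ends (S : {fset face}) :
  (edge_perimeter S * 2 = \sum_(f <- S) strip_ends DX S f + \sum_(f <- S) strip_ends DY S f
     + \sum_(f <- S) strip_ends DZ S f)%N.
Proof.
rewrite /edge_perimeter big_distrl -!big_split /=; apply: eq_bigr => f _.
rewrite neighborsE /strip_ends /=; case: f => [[x y] []] /=;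
  by case: (_ \notin S); case: (_ \notin S); case: (_ \notin S).
Qed.

Lemma sum_by_strips k (S : {fset face}) (F : face -> nat) lo n :
  (forall f, f \in S -> lo <= strip k f < lo + n%:Z) ->
  (\sum_(f <- S) F f = \sum_(i < n) \sum_(f <- S | strip k f == (lo + i%:Z)%R) F f)%N.
Proof.
move=> hS; under [RHS]eq_bigr do rewrite big_mkcond.
rewrite exchange_big /= big_seq [RHS]big_seq; apply: eq_bigr => f fS.
have /andP [h1 h2] := hS f fS.
have fn : (absz (strip k f - lo) < n)%N by lia.
rewrite (bigD1 (Ordinal fn)) //= ifT; last by apply/eqP; lia.
rewrite big1 ?addn0 // => i ni; rewrite ifF //; apply/negbTE/eqP => e.
by move/eqP: ni; apply; apply: val_inj => /=; lia.
Qed.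

(* Walking along a strip in a fixed direction from a face of a finite set S one must
   leave S: the iterates of such a move are pairwise distinct. *)
Lemma exists_strip_exit k (h : face -> face) c (S : {fset face}) f :
  c != 0 -> (forall g, strip k (h g) = strip k g) -> (forall g, pos k (h g) = pos k g + c) ->
  f \in S -> exists2 g, g \in S & strip k g = strip k f /\ h g \notin S.
Proof.
move=> c0 hk hp fS.
have iter_h n : strip k (iter n h f) = strip k f /\ pos k (iter n h f) = pos k f + n%:Z * c.
  elim: n => [|n [IHk IHp]] /=; first by split=> //; lia.
  by rewrite hk hp IHk IHp; split=> //; lia.
have [/hasP [g gS /andP [/eqP e n]] | /hasPn H] :=
  boolP (has (fun g => (strip k g == strip k f) && (h g \notin S)) S); first by exists g.
have inS n : iter n h f \in S.
  elim: n => [|n IH] //=; have := H _ IH.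
  by have [-> _] := iter_h n; rewrite eqxx /= negbK.
pose s := [seq iter i h f | i <- iota 0 (size S).+1].
have us : uniq s.
  rewrite map_inj_in_uniq ?iota_uniq // => i j _ _ e.
  have [_ pi] := iter_h i; have [_ pj] := iter_h j.
  have : (i%:Z - j%:Z) * c = 0 by move: pi pj; rewrite e; lia.
  by move/eqP; rewrite mulf_eq0 (negbTE c0) orbF subr_eq0 => /eqP; lia.
have sub : {subset s <= S} by move=> g /mapP [i _ ->].
by have := uniq_leq_size us sub; rewrite size_map size_iota ltnn.
Qed.

Lemma strip_ends_ge2 k (S : {fset face}) v :
  (exists2 f, f \in S & strip k f = v) ->
  (2 <= \sum_(f <- S | strip k f == v) strip_ends k S f)%N.
Proof.
move=> [f fS fv]; rewrite /strip_ends big_split /=.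
have one (h : face -> face) c : c != 0 -> (forall g, strip k (h g) = strip k g) ->
    (forall g, pos k (h g) = pos k g + c) ->
    (1 <= \sum_(g <- S | strip k g == v) (h g \notin S))%N.
  move=> c0 hk hp; have [g gS [gk gn]] := exists_strip_exit c0 hk hp fS.
  by rewrite big_mkcond (bigD1_seq g) ?fset_uniq //= gk fv eqxx gn leq_addr.
rewrite -[2%N]/(1 + 1)%N leq_add //.
  by apply: (one _ 1) => //; [exact: strip_fwd | exact: pos_fwd].
by apply: (one _ (-1)) => //; [exact: strip_bwd | move=> g; rewrite pos_bwd].
Qed.

Lemma sum_bool_count (T : eqType) (s : seq T) (A B : pred T) :
  (\sum_(x <- s | A x) (B x : nat) = count (predI A B) s)%N.
Proof. by rewrite -sum1_count big_mkcondr; apply: eq_bigr => x _; case: (B x). Qed.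

Lemma count_le1 (T : eqType) (s : seq T) (P : pred T) :
  uniq s -> {in s &, forall x y, P x -> P y -> x = y} -> (count P s <= 1)%N.
Proof.
elim: s => [|x s IH] //= /andP [xs us] H.
case Px: (P x) => /=; last by apply: IH => // a b ha hb; apply: H; rewrite inE ?ha ?hb orbT.
rewrite add1n ltnS leqn0 eqn0Ngt -has_count; apply/hasP => -[y ys Py].
have yxs : y \in x :: s by rewrite inE ys orbT.
by move: xs; rewrite (H x y (mem_head _ _) yxs Px Py) ys.
Qed.

Lemma strip_ends_le2 k (S : {fset face}) v :
  (forall f g, f \in S -> g \in S -> strip k f = strip k g -> pos k f < pos k g ->
      fwd k f \in S /\ bwd k g \in S) ->
  (\sum_(f <- S | strip k f == v) strip_ends k S f <= 2)%N.
Proof.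
move=> hc; rewrite /strip_ends big_split /= -[2%N]/(1 + 1)%N.
rewrite !sum_bool_count; apply: leq_add; apply: count_le1; rewrite ?fset_uniq //;
  move=> f g fS gS /andP [/eqP fk fn] /andP [/eqP gk gn];
  (have kfg : strip k f = strip k g by rewrite fk gk); apply: (strip_pos_inj kfg);
  (case: (ltrgtP (pos k f) (pos k g)) => // lt; exfalso);
  [ have [h _] := hc _ _ fS gS kfg lt; by rewrite h in fn
  | have [h _] := hc _ _ gS fS (esym kfg) lt; by rewrite h in gn
  | have [_ h] := hc _ _ fS gS kfg lt; by rewrite h in gn
  | have [_ h] := hc _ _ gS fS (esym kfg) lt; by rewrite h in fn ].
Qed.

Lemma strip_ends_lower k (S : {fset face}) lo n :
  (forall f, f \in S -> lo <= strip k f < lo + n%:Z) ->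
  (forall i : nat, (i < n)%N -> exists2 f, f \in S & strip k f = lo + i%:Z) ->
  (2 * n <= \sum_(f <- S) strip_ends k S f)%N.
Proof.
move=> hr hn; rewrite (sum_by_strips (strip_ends k S) hr).
have -> : (2 * n = \sum_(i < n) 2)%N by rewrite sum_nat_const card_ord mulnC.
by apply: leq_sum => i _; apply: strip_ends_ge2; exact: hn.
Qed.

Lemma strip_ends_upper k (S : {fset face}) lo n :
  (forall f, f \in S -> lo <= strip k f < lo + n%:Z) ->
  (forall f g, f \in S -> g \in S -> strip k f = strip k g -> pos k f < pos k g ->
      fwd k f \in S /\ bwd k g \in S) ->
  (\sum_(f <- S) strip_ends k S f <= 2 * n)%N.
Proof.
move=> hr hc; rewrite (sum_by_strips (strip_ends k S) hr).
have -> : (2 * n = \sum_(i < n) 2)%N by rewrite sum_nat_const card_ord mulnC.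
by apply: leq_sum => i _; apply: strip_ends_le2.
Qed.

Lemma path_meets_strips k f s v :
  path adj f s ->
  (strip k f <= v <= strip k (last f s)) \/ (strip k (last f s) <= v <= strip k f) ->
  exists2 g, g \in f :: s & strip k g = v.
Proof.
elim: s f => [|h s IH] f /=; first by move=> _ H; exists f; rewrite ?mem_head //; lia.
move=> /andP [afh ph] H.
have [e|ne] := eqVneq (strip k f) v; first by exists f; rewrite ?mem_head.
have := adj_strip k afh => hk.
have [g gin gv] : exists2 g, g \in h :: s & strip k g = v by apply: IH => //; lia.
by exists g => //; rewrite inE gin orbT.
Qed.

Record hexbox := HexBox { xlo : int; xhi : int; ylo : int; yhi : int; zlo : int; zhi : int }.

Definition inbox (B : hexbox) (f : face) : Prop :=
  [/\ xlo B <= fX f <= xhi B, ylo B <= fY f <= yhi B & zlo B <= fZ f <= zhi B].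

(* The six side lengths of the boundary hexagon of a box, in cyclic order; with
   d = side1 + side2 + side3 they read a, d-a-b, b, d-b-c, c, d-c-a for the corner
   cuts a = side1, b = side3, c = side5 of a triangle of side d. *)
Definition side1 B := zlo B - xlo B - ylo B.
Definition side2 B := xhi B + ylo B + 1 - zlo B.
Definition side3 B := zhi B - xhi B - ylo B.
Definition side4 B := xhi B + yhi B + 1 - zhi B.
Definition side5 B := zhi B - xlo B - yhi B.
Definition side6 B := xlo B + yhi B + 1 - zlo B.

Definition valid_box B :=
  0 <= side1 B /\ 0 <= side2 B /\ 0 <= side3 B /\ 0 <= side4 B /\ 0 <= side5 B /\ 0 <= side6 B.

Definition strip_lo k B := match k with DX => xlo B | DY => ylo B | DZ => zlo B end.
Definition strip_hi k B := match k with DX => xhi B | DY => yhi B | DZ => zhi B end.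
Definition nstrips k B : nat := absz (strip_hi k B - strip_lo k B + 1).

Definition box_perim B : nat := (nstrips DX B + nstrips DY B + nstrips DZ B)%N.

Ltac unfold_box :=
  rewrite /inbox /valid_box /side1 /side2 /side3 /side4 /side5 /side6
          /strip_lo /strip_hi /nstrips /= /fX /fY /fZ /=.
Ltac split_lia := intros; repeat match goal with H : and3 _ _ _ |- _ => destruct H end;
  match goal with |- and3 _ _ _ => constructor; lia | _ => lia end.

Lemma box_strip_convex k B f g : inbox B f -> inbox B g -> strip k f = strip k g ->
  pos k f < pos k g -> inbox B (fwd k f) /\ inbox B (bwd k g).
Proof.
case: k; case: f => [[x y] []]; case: g => [[x' y'] []]; unfold_box;
  move=> [h1 h2 h3] [h4 h5 h6] e lt; (split; split); lia.
Qed.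

Lemma box_strip_range k B f : inbox B f -> strip_lo k B <= strip_hi k B ->
  strip_lo k B <= strip k f < strip_lo k B + (nstrips k B)%:Z.
Proof.
case: k; case: f => [[x y] o]; unfold_box; move=> [h1 h2 h3]; case: o h3 => /= h3; lia.
Qed.

Lemma box_perimeter_le (S : {fset face}) B :
  (forall f, f \in S <-> inbox B f) ->
  xlo B <= xhi B -> ylo B <= yhi B -> zlo B <= zhi B ->
  (edge_perimeter S <= box_perim B)%N.
Proof.
move=> hS hx hy hz.
have H k : strip_lo k B <= strip_hi k B ->
    (\sum_(f <- S) strip_ends k S f <= 2 * nstrips k B)%N.
  move=> hk; apply: strip_ends_upper => [f /hS fb|f g /hS fS /hS gS e lt].
    exact: box_strip_range.
  by have [a b] := box_strip_convex fS gS e lt; split; apply/hS.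
have := leq_add (leq_add (H DX hx) (H DY hy)) (H DZ hz).
rewrite -!mulnDr -perimeter_strip_ends /box_perim; lia.
Qed.

Lemma box_perimeter_ge (S : {fset face}) B :
  (forall f, f \in S -> inbox B f) ->
  xlo B <= xhi B -> ylo B <= yhi B -> zlo B <= zhi B ->
  (forall k (i : nat), (i < nstrips k B)%N ->
     exists2 f, f \in S & strip k f = strip_lo k B + i%:Z) ->
  (box_perim B <= edge_perimeter S)%N.
Proof.
move=> hS hx hy hz hn.
have H k : strip_lo k B <= strip_hi k B ->
    (2 * nstrips k B <= \sum_(f <- S) strip_ends k S f)%N.
  move=> hk; apply: strip_ends_lower (hn k) => f /hS fb; exact: box_strip_range.
have := leq_add (leq_add (H DX hx) (H DY hy)) (H DZ hz).
rewrite -!mulnDr -perimeter_strip_ends /box_perim; lia.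
Qed.

Lemma connected_meets_strips k (S : {fset face}) B flo fhi :
  edge_connected S -> flo \in S -> fhi \in S ->
  strip k flo = strip_lo k B -> strip k fhi = strip_hi k B -> strip_lo k B <= strip_hi k B ->
  forall i : nat, (i < nstrips k B)%N -> exists2 f, f \in S & strip k f = strip_lo k B + i%:Z.
Proof.
move=> hc hlo hhi elo ehi hle i hi.
have [s [ps ls als]] := hc _ _ hlo hhi.
have hv : strip k flo <= strip_lo k B + i%:Z <= strip k (last flo s).
  by rewrite ls elo ehi; move: hi; rewrite /nstrips; lia.
have [g gin gv] := path_meets_strips ps (or_introl hv).
by exists g => //; move: gin; rewrite inE => /orP [/eqP -> //|/(allP als)].
Qed.

Lemma strip_count_le k (S : {fset face}) v L U : L <= U + 1 ->
  (forall f, f \in S -> strip k f = v -> L <= pos k f <= U) ->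
  (count (fun f => strip k f == v) S <= absz (U - L + 1)%R)%N.
Proof.
move=> hLU hS; rewrite -size_filter; set T := [seq f <- S | _].
have hT f : f \in T -> f \in S /\ strip k f = v by rewrite mem_filter => /andP [/eqP ? ?].
have u : uniq [seq absz (pos k f - L) | f <- T].
  rewrite map_inj_in_uniq ?filter_uniq ?fset_uniq // => f g /hT [fS fv] /hT [gS gv] e.
  have := hS _ fS fv; have := hS _ gS gv => h1 h2.
  by apply: (@strip_pos_inj k); [rewrite fv gv | lia].
have sub : {subset [seq absz (pos k f - L) | f <- T] <= iota 0 (absz (U - L + 1))}.
  by move=> i /mapP [f /hT [fS fv] ->]; rewrite mem_iota /=; have := hS _ fS fv; lia.
by have := uniq_leq_size u sub; rewrite size_map size_iota.
Qed.

Lemma strip_count_ge k (S : {fset face}) v L U : L <= U + 1 ->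
  (forall w, L <= w <= U -> exists f, [/\ f \in S, strip k f = v & pos k f = w]) ->
  (absz (U - L + 1)%R <= count (fun f => strip k f == v) S)%N.
Proof.
move=> hLU hS; rewrite -size_filter; set T := [seq f <- S | _].
have sub : {subset iota 0 (absz (U - L + 1)) <= [seq absz (pos k f - L) | f <- T]}.
  move=> i; rewrite mem_iota /= => hi.
  have [f [fS fv fw]] := hS (L + i%:Z) ltac:(lia).
  by apply/mapP; exists f; [rewrite mem_filter fv eqxx | rewrite fw; lia].
by have := uniq_leq_size (iota_uniq 0 _) sub; rewrite size_iota size_map.
Qed.

Definition in_column B (v w : int) : Prop :=
  (2 * ylo B + v <= w <= 2 * yhi B + v + 1) /\ (2 * zlo B - v - 1 <= w <= 2 * zhi B - v).

Lemma inbox_column B f : inbox B f -> in_column B (fX f) (pos DX f).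
Proof.
case: f => [[x y] o]; rewrite /in_column; unfold_box => -[h1 h2 h3].
by case: o h3 => /= h3; lia.
Qed.

Lemma column_inbox B v w : xlo B <= v <= xhi B -> in_column B v w ->
  exists f, [/\ inbox B f, fX f = v & pos DX f = w].
Proof.
move=> hv hc; have e := divz_eq (w - v) 2.
have m0 : 0 <= ((w - v) %% 2)%Z by apply: modz_ge0.
have m1 : ((w - v) %% 2 < 2)%Z by apply: ltz_pmod.
move: e m0 m1; set q := ((w - v) %/ 2)%Z; set r := ((w - v) %% 2)%Z => e m0 m1.
exists (v, q, r == 0); move: hc; rewrite /in_column; unfold_box.
by case: (eqVneq r 0) => [r0|r1] /= hc; split; try split; lia.
Qed.

(* The number of faces of the box B in its column xlo B + i: it grows by two per column
   until the first corner, is constant between the two left corners, and then decreases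
   by two per column. *)
Definition col_size B (i : nat) : int :=
  if (i%:Z < side1 B) && (i%:Z < side5 B) then 2 * side6 B + 2 * i%:Z + 1
  else if (side1 B <= i%:Z) && (side5 B <= i%:Z)
  then 2 * (side1 B + side2 B + side3 B) - 2 * i%:Z - 1
  else if i%:Z < side5 B then 2 * (side6 B + side1 B) else 2 * (side5 B + side6 B).

Lemma column_interval B (i : nat) : valid_box B -> (i < nstrips DX B)%N ->
  exists L U, [/\ col_size B i = U - L + 1, L <= U + 1 &
     forall w, L <= w <= U <-> in_column B (xlo B + i%:Z) w].
Proof.
rewrite /col_size; case: (ltrP (i%:Z) (side1 B)) => h1; case: (ltrP (i%:Z) (side5 B)) => h5 /=;
  move: h1 h5; rewrite /in_column; unfold_box => h1 h5 hv hi.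
- exists (2 * zlo B - (xlo B + i%:Z) - 1), (2 * yhi B + (xlo B + i%:Z) + 1).
  by split; [lia | lia | move=> w; lia].
- exists (2 * zlo B - (xlo B + i%:Z) - 1), (2 * zhi B - (xlo B + i%:Z)).
  by split; [lia | lia | move=> w; lia].
- exists (2 * ylo B + (xlo B + i%:Z)), (2 * yhi B + (xlo B + i%:Z) + 1).
  by split; [lia | lia | move=> w; lia].
- exists (2 * ylo B + (xlo B + i%:Z)), (2 * zhi B - (xlo B + i%:Z)).
  by split; [lia | lia | move=> w; lia].
Qed.

Lemma col_size_ge0 B (i : nat) : valid_box B -> (i < nstrips DX B)%N -> 0 <= col_size B i.
Proof. by move=> hv hi; have [L [U [-> hLU _]]] := column_interval hv hi; lia. Qed.

Lemma column_count_le (S : {fset face}) B (i : nat) : valid_box B -> (i < nstrips DX B)%N ->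
  (forall f, f \in S -> inbox B f) ->
  (count (fun f => strip DX f == (xlo B + i%:Z)%R) S <= absz (col_size B i))%N.
Proof.
move=> hv hi hS; have [L [U [-> hLU hw]]] := column_interval hv hi.
apply: strip_count_le => // f fS fv; apply/hw; rewrite -fv; exact: inbox_column (hS _ fS).
Qed.

Lemma column_count_ge (S : {fset face}) B (i : nat) : valid_box B -> (i < nstrips DX B)%N ->
  (forall f, inbox B f -> f \in S) ->
  (absz (col_size B i) <= count (fun f => strip DX f == (xlo B + i%:Z)%R) S)%N.
Proof.
move=> hv hi hS; have [L [U [-> hLU hw]]] := column_interval hv hi.
apply: strip_count_ge => // w /hw hc.
have hx : xlo B <= xlo B + i%:Z <= xhi B by move: hi hv; unfold_box; lia.
by have [f [fb fv fw]] := column_inbox hx hc; exists f; split => //; exact: hS.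
Qed.

Lemma sum_arith_prog (a b : nat) (al be : int) : (a <= b)%N ->
  \sum_(a <= i < b) (al + 2 * be * i%:Z) =
  (b%:Z - a%:Z) * al + be * (b%:Z * (b%:Z - 1) - a%:Z * (a%:Z - 1)).
Proof.
elim: b => [|b IH]; first by rewrite leqn0 => /eqP ->; rewrite big_geq //; ring.
rewrite leq_eqVlt => /orP [/eqP ->|hab]; first by rewrite big_geq //; ring.
by rewrite big_nat_recr //= IH // !intS; ring.
Qed.

Lemma sum_three_pieces (F : nat -> int) (a b n : nat) (al c be : int) :
  (a <= b)%N -> (b <= n)%N ->
  (forall i : nat, (i < a)%N -> F i = al + 2 * i%:Z) ->
  (forall i : nat, (a <= i < b)%N -> F i = c) ->
  (forall i : nat, (b <= i < n)%N -> F i = be - 2 * i%:Z) ->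
  \sum_(i < n) F i = a%:Z * al + a%:Z * (a%:Z - 1) + (b%:Z - a%:Z) * c
                     + (n%:Z - b%:Z) * be - (n%:Z * (n%:Z - 1) - b%:Z * (b%:Z - 1)).
Proof.
move=> hab hbn h1 h2 h3; rewrite -(big_mkord xpredT F).
rewrite (big_cat_nat (leq0n a) (leq_trans hab hbn)) (big_cat_nat hab hbn) /=.
rewrite (eq_big_nat _ _ (F2 := fun i : nat => al + 2 * 1 * i%:Z)); last first.
  by move=> i /andP [_ /h1 ->]; ring.
rewrite [X in _ + (X + _)](eq_big_nat _ _ (F2 := fun i : nat => c + 2 * 0 * i%:Z)); last first.
  by move=> i /h2 ->; ring.
rewrite [X in _ + (_ + X)](eq_big_nat _ _ (F2 := fun i : nat => be + 2 * (-1) * i%:Z)); last first.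
  by move=> i /h3 ->; ring.
by rewrite !sum_arith_prog //; ring.
Qed.

(* The area of a box: a triangle of side d = side1 + side2 + side3 minus its three
   corner triangles of sides side1, side3, side5. *)
Definition box_area B : int :=
  (side1 B + side2 B + side3 B) ^+ 2 - side1 B ^+ 2 - side3 B ^+ 2 - side5 B ^+ 2.

Lemma sum_col_size B : valid_box B -> xlo B <= xhi B ->
  \sum_(i < nstrips DX B) col_size B i = box_area B.
Proof.
move=> hv hx.
have hn : (nstrips DX B)%:Z = side1 B + side2 B by move: hv hx; unfold_box; lia.
have [a ha] : exists a : nat, a%:Z = side1 B by exists (absz (side1 B)); move: hv; unfold_box; lia.
have [b hb] : exists b : nat, b%:Z = side5 B by exists (absz (side5 B)); move: hv; unfold_box; lia.
have han : (a <= nstrips DX B)%N by move: hv hx ha; unfold_box; lia.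
have hbn : (b <= nstrips DX B)%N by move: hv hx hb; unfold_box; lia.
rewrite /box_area; case: (leqP a b) => [hab|hba];
  [ rewrite (sum_three_pieces (F := col_size B) (al := 2 * side6 B + 1)
      (be := 2 * (side1 B + side2 B + side3 B) - 1) (c := 2 * (side6 B + side1 B)) hab hbn)
  | rewrite (sum_three_pieces (F := col_size B) (al := 2 * side6 B + 1)
      (be := 2 * (side1 B + side2 B + side3 B) - 1) (c := 2 * (side5 B + side6 B))
      (ltnW hba) han) ];
  try by move=> i hi; rewrite /col_size; repeat case: ifP => ?; lia.
all: by rewrite hn ha hb; unfold_box; ring.
Qed.

Lemma card_by_columns (S : {fset face}) B : xlo B <= xhi B ->
  (forall f, f \in S -> inbox B f) ->
  (#|` S| = \sum_(i < nstrips DX B) count (fun f => strip DX f == (xlo B + i%:Z)%R) S)%N.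
Proof.
move=> hx hS; rewrite card_fset_sum1 (sum_by_strips (fun _ => 1%N) (k := DX) (lo := xlo B) (n := nstrips DX B)).
  by apply: eq_bigr => i _; rewrite sum1_count.
by move=> f /hS fb; apply: (box_strip_range (k := DX) fb hx).
Qed.

Lemma area_le_box (S : {fset face}) B : valid_box B -> xlo B <= xhi B ->
  (forall f, f \in S -> inbox B f) -> #|` S|%:Z <= box_area B.
Proof.
move=> hv hx hS; rewrite (card_by_columns hx hS) -(sum_col_size hv hx) -natz natr_sum.
apply: ler_sum => i _; rewrite natz.
by have := column_count_le hv (ltn_ord i) hS; have := col_size_ge0 hv (ltn_ord i); lia.
Qed.

Lemma area_box (S : {fset face}) B : valid_box B -> xlo B <= xhi B ->
  (forall f, f \in S <-> inbox B f) -> #|` S|%:Z = box_area B.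
Proof.
move=> hv hx hS.
have hS1 f : f \in S -> inbox B f by move/hS.
have hS2 f : inbox B f -> f \in S by move/hS.
rewrite (card_by_columns hx hS1) -(sum_col_size hv hx) -natz natr_sum.
apply: eq_bigr => i _; rewrite natz.
have := column_count_le hv (ltn_ord i) hS1; have := column_count_ge hv (ltn_ord i) hS2.
by have := col_size_ge0 hv (ltn_ord i); lia.
Qed.

Definition linked (S : {fset face}) f g :=
  exists s, [/\ path adj f s, last f s = g & all (fun h => h \in S) s].

Lemma adj_sym f g : adj f g -> adj g f.
Proof.
rewrite /adj !neighborsE !inE; case: f => [[x y] []]; case: g => [[x' y'] []] /=;
  rewrite /dnf /upf ?xpair_eqE; move=> /or3P [] /andP [/andP [/eqP h1 /eqP h2] //] _;
  apply/or3P; (try by constructor 1; rewrite ?eqxx ?h1 ?h2 //=; apply/andP; split; apply/eqP; lia);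
  (try by constructor 2; apply/andP; split; [apply/andP; split|]; apply/eqP; lia);
  (try by constructor 3; apply/andP; split; [apply/andP; split|]; apply/eqP; lia).
Qed.

Lemma linked_trans S f g h : linked S f g -> linked S g h -> linked S f h.
Proof.
move=> [s [ps ls as1]] [t [pt lt at1]]; exists (s ++ t).
by rewrite cat_path last_cat ls ps pt lt all_cat as1 at1.
Qed.

Lemma linked_step S f g : adj f g -> g \in S -> linked S f g.
Proof. by move=> a gS; exists [:: g]; rewrite /= a gS. Qed.

Lemma linked_sym S f g : f \in S -> linked S f g -> linked S g f.
Proof.
move=> fS [s [ps <- as1]]; elim: s f fS ps as1 => [|h s IH] f fS /=; first by exists [::].
move=> /andP [afh phs] /andP [hS as1].
by apply: linked_trans (IH h hS phs as1) _; apply: linked_step fS; exact: adj_sym.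
Qed.

Lemma linked_to_root (S : {fset face}) f0 :
  (forall f, f \in S -> linked S f f0) -> edge_connected S.
Proof.
move=> hc f g fS gS; have := linked_trans (hc f fS) (linked_sym gS (hc g gS)).
by move=> [s hs]; exists s.
Qed.

(* The lowest corner face of a box, and a potential that decreases along a path from any
   face of the box to it. *)
Definition box_corner B : face :=
  if side1 B == 0 then upf (xlo B) (ylo B) else dnf (xlo B) (zlo B - xlo B - 1).

Definition corner_dist B f : int :=
  2 * (fX f - xlo B) + fY f + fZ f - 2 * ylo B - xlo B.

Lemma box_moves B f : valid_box B -> inbox B f ->
  [\/ f = box_corner B, inbox B (bwd DX f), (f.2 /\ inbox B (nX f)) |
      (~~ f.2 /\ inbox B (nY f) /\ inbox B (nX (nY f)))].
Proof.
rewrite /box_corner; case: f => [[x y] []]; case: eqP => s10; move: s10;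
  unfold_box => s10 hv [h1 h2 h3].
- case: (eqVneq x (xlo B)) => ex; last by constructor 3; split=> //; split; lia.
  case: (eqVneq y (ylo B)) => ey; first by constructor 1; rewrite ex ey.
  by constructor 2; split; lia.
- case: (eqVneq x (xlo B)) => ex; last by constructor 3; split=> //; split; lia.
  by constructor 2; split; lia.
- case: (ltrP (zlo B) (x + y + 1)) => hz; first by constructor 2; split; lia.
  by constructor 4; split=> //; split; split; lia.
- case: (ltrP (zlo B) (x + y + 1)) => hz; first by constructor 2; split; lia.
  case: (eqVneq x (xlo B)) => ex; first by constructor 1; rewrite /dnf ex; congr (_, _, _); lia.
  by constructor 4; split=> //; split; split; lia.
Qed.

Lemma box_linked_corner (S : {fset face}) B : valid_box B ->
  (forall f, f \in S <-> inbox B f) ->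
  forall (n : nat) f, inbox B f -> (absz (corner_dist B f) <= n)%N -> linked S f (box_corner B).
Proof.
move=> hv hS; elim=> [|n IH] f fb hn.
  case: (box_moves hv fb) => [->|h|[o h]|[o [h1 h2]]]; first by exists [::].
  - by exfalso; move: fb h hn; rewrite /corner_dist; case: f => [[x y] []] /=; unfold_box; split_lia.
  - by exfalso; move: fb h hn; rewrite /corner_dist; case: f o => [[x y] []] //= _; unfold_box; split_lia.
  - by exfalso; move: fb h1 h2 hn; rewrite /corner_dist; case: f o => [[x y] []] //= _;
      unfold_box; split_lia.
have step g : adj f g -> inbox B g -> linked S f g by move=> a /hS; exact: linked_step.
case: (box_moves hv fb) => [->|h|[o h]|[o [h1 h2]]]; first by exists [::].
- apply: linked_trans (step _ _ h) (IH _ h _).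
    by rewrite /adj neighborsE; case: f {fb hn h step} => [[x y] []]; rewrite !inE eqxx ?orbT.
  by clear step; move: fb h hn; rewrite /corner_dist; case: f => [[x y] []] /=; unfold_box; split_lia.
- apply: linked_trans (step _ _ h) (IH _ h _); first by rewrite /adj neighborsE !inE eqxx ?orbT.
  by clear step; move: fb h hn; rewrite /corner_dist; case: f o => [[x y] []] //= _; unfold_box; split_lia.
- have a2 : linked S (nY f) (nX (nY f)).
    by apply: linked_step; [rewrite /adj neighborsE !inE eqxx ?orbT | apply/hS].
  apply: linked_trans (step _ _ h1) (linked_trans a2 (IH _ h2 _)).
    by rewrite /adj neighborsE !inE eqxx ?orbT.
  by clear a2 step; move: fb h1 h2 hn; rewrite /corner_dist; case: f o => [[x y] []] //= _;
    unfold_box; split_lia.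
Qed.

Lemma box_connected (S : {fset face}) B : valid_box B ->
  (forall f, f \in S <-> inbox B f) -> edge_connected S.
Proof.
move=> hv hS; apply: (@linked_to_root _ (box_corner B)) => f /hS fb.
exact: box_linked_corner hv hS _ _ fb (leqnn _).
Qed.

Definition Tbox (d a b c : nat) : hexbox :=
  HexBox 0 (d%:Z - b%:Z - 1) 0 (d%:Z - c%:Z - 1) a%:Z (d%:Z - 1).

Lemma Tset_box d a b c f : (b <= d)%N -> (c <= d)%N ->
  f \in Tset d a b c <-> inbox (Tbox d a b c) f.
Proof.
move=> hb hc; rewrite /Tset inE /Tface_seq; case: f => [[x y] o]; split.
  move=> /flatten_mapP [i]; rewrite mem_iota => /andP [_ hi] /flatten_mapP [j].
  rewrite mem_iota => /andP [_ hj] /mapP [o' ]; rewrite mem_filter => /andP [ht _] [-> -> ->].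
  by move: ht; rewrite /inT; unfold_box; case: (o') => /= ht; split; lia.
unfold_box => -[h1 h2 h3].
apply/flatten_mapP; exists (absz x); first by rewrite mem_iota; lia.
apply/flatten_mapP; exists (absz y); first by rewrite mem_iota; lia.
apply/mapP; exists o; last by congr (_, _, _); lia.
have ht : inT d a b c `|x| `|y| o by rewrite /inT; case: o h3 => /= h3; lia.
by case: o {h3} ht => ->; [rewrite inE | case: ifP; rewrite !inE].
Qed.

Lemma Tset_props (d a b c : nat) : (b < d)%N -> (c < d)%N -> (a < d)%N ->
  (a + b <= d)%N -> (b + c <= d)%N -> (c + a <= d)%N ->
  [/\ polyiamond (Tset d a b c),
      (area (Tset d a b c))%:Z = d%:Z ^+ 2 - a%:Z ^+ 2 - b%:Z ^+ 2 - c%:Z ^+ 2 &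
      (edge_perimeter (Tset d a b c) <= 3 * d - a - b - c)%N].
Proof.
move=> h1 h2 h3 h4 h5 h6.
have hm f : f \in Tset d a b c <-> inbox (Tbox d a b c) f by apply: Tset_box; apply: ltnW.
have hv : valid_box (Tbox d a b c) by rewrite /Tbox; unfold_box; lia.
have [hx hy hz] : [/\ xlo (Tbox d a b c) <= xhi (Tbox d a b c),
    ylo (Tbox d a b c) <= yhi (Tbox d a b c) & zlo (Tbox d a b c) <= zhi (Tbox d a b c)].
  by rewrite /Tbox /=; split; lia.
split.
- split; last exact: box_connected hv hm.
  apply/fset0Pn; exists (box_corner (Tbox d a b c)); apply/hm.
  by move: hv; rewrite /box_corner; case: eqP; unfold_box => /= *; split; lia.
- by rewrite /area (area_box hv hx hm) /box_area; unfold_box; ring.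
- apply: leq_trans (box_perimeter_le hm hx hy hz) _.
  by rewrite /box_perim /nstrips /Tbox /=; lia.
Qed.

Definition rot_box B := HexBox (- yhi B - 1) (- ylo B - 1) (zlo B) (zhi B) (xlo B) (xhi B).
Definition refl_box B := HexBox (ylo B) (yhi B) (xlo B) (xhi B) (zlo B) (zhi B).
Definition transl_box (s t : int) B :=
  HexBox (xlo B + s) (xhi B + s) (ylo B + t) (yhi B + t) (zlo B + s + t) (zhi B + s + t).
Definition sym_box n b s t B := transl_box s t (iter n rot_box (if b then refl_box B else B)).

Lemma inbox_rot B g : inbox (rot_box B) (Defs.rot g) <-> inbox B g.
Proof. by case: g => [[x y] []]; rewrite /Defs.rot /dnf /upf; unfold_box; split; split_lia. Qed.
Lemma inbox_refl B g : inbox (refl_box B) (refl g) <-> inbox B g.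
Proof. by case: g => [[x y] []]; rewrite /refl; unfold_box; split; split_lia. Qed.
Lemma inbox_transl s t B g : inbox (transl_box s t B) (transl s t g) <-> inbox B g.
Proof. by case: g => [[x y] []]; rewrite /transl; unfold_box; split; split_lia. Qed.

Lemma inbox_sym n b s t B g : inbox (sym_box n b s t B) (lattice_sym n b s t g) <-> inbox B g.
Proof.
rewrite /sym_box /lattice_sym inbox_transl.
have -> : inbox B g <-> inbox (if b then refl_box B else B) (if b then refl g else g).
  by case: b; rewrite ?inbox_refl.
by elim: n => [|n IH] //=; rewrite inbox_rot.
Qed.

(* lattice_sym n b s t is a bijection of the faces (rot has order 6). *)
Lemma rot6 h : iter 6 Defs.rot h = h.
Proof. by case: h => [[x y] []]; rewrite /= /dnf /upf; congr (_, _, _); ring. Qed.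

Lemma rot_inj : injective Defs.rot.
Proof. by move=> f g e; rewrite -(rot6 f) -(rot6 g) !iterSr e. Qed.

Lemma lattice_sym_inj n b s t : injective (lattice_sym n b s t).
Proof.
move=> f g; rewrite /lattice_sym => e.
have e2 : iter n Defs.rot (if b then refl f else f) = iter n Defs.rot (if b then refl g else g).
  move: e; case: (iter n Defs.rot _) => [[x y] o]; case: (iter n Defs.rot _) => [[x' y'] o'].
  by rewrite /transl => -[h1 h2 ->]; congr (_, _, _); lia.
have : (if b then refl f else f) = (if b then refl g else g).
  by elim: n e2 {e} => [|n IH] //= /rot_inj /IH.
by clear e e2; case: b; case: f => [[x y] o]; case: g => [[x' y'] o'] => //= -[-> -> ->].
Qed.

Lemma lattice_sym_surj n b s t f : exists g, f = lattice_sym n b s t g.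
Proof.
pose h := transl (- s) (- t) f.
have rot6k k : iter (6 * k) Defs.rot h = h by elim: k => [|k IH] //; rewrite mulnS iterD rot6 IH.
pose g0 := iter (5 * n) Defs.rot h.
exists (if b then refl g0 else g0); rewrite /lattice_sym.
have -> : (if b then refl (if b then refl g0 else g0) else (if b then refl g0 else g0)) = g0.
  by case: b => //; rewrite /refl; case: g0 => [[x y] o].
rewrite /g0 -iterD -[(n + 5 * n)%N]/(6 * n)%N rot6k /h.
by case: f {h rot6k g0} => [[x y] o] /=; congr (_, _, _); ring.
Qed.

Definition sides6 := (int * int * int * int * int * int)%type.
Definition rot_sides (t : sides6) : sides6 :=
  let: (a1, a2, a3, a4, a5, a6) := t in (a6, a1, a2, a3, a4, a5).
Definition refl_sides (t : sides6) : sides6 :=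
  let: (a1, a2, a3, a4, a5, a6) := t in (a1, a6, a5, a4, a3, a2).

Definition sides B : sides6 := (side1 B, side2 B, side3 B, side4 B, side5 B, side6 B).

Definition hex_sides (d a b c : int) : sides6 := (a, d - a - b, b, d - b - c, c, d - c - a).

Lemma sides_rot B : sides (rot_box B) = rot_sides (sides B).
Proof. by rewrite /sides /rot_sides; unfold_box; congr (_, _, _, _, _, _); lia. Qed.
Lemma sides_refl B : sides (refl_box B) = refl_sides (sides B).
Proof. by rewrite /sides /refl_sides; unfold_box; congr (_, _, _, _, _, _); lia. Qed.

Lemma sides_hex B : sides B = hex_sides (side1 B + side2 B + side3 B) (side1 B) (side3 B) (side5 B).
Proof. by rewrite /sides /hex_sides; congr (_, _, _, _, _, _); unfold_box; lia. Qed.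

Lemma sides_Tbox (d a b c : nat) : sides (Tbox d a b c) = hex_sides d%:Z a%:Z b%:Z c%:Z.
Proof. by rewrite /sides /hex_sides /Tbox; congr (_, _, _, _, _, _); unfold_box; lia. Qed.

Lemma sides_sym n b B : sides (iter n rot_box (if b then refl_box B else B)) =
  iter n rot_sides (if b then refl_sides (sides B) else sides B).
Proof. by elim: n => [|n IH] /=; [case: b; rewrite ?sides_refl | rewrite sides_rot IH]. Qed.

(* A box is determined up to translation by its side sequence, so a set of faces that fills a
   box whose side sequence is a symmetric image of the sides of the region Q of a box q is
   the image of Q under a lattice symmetry. *)
Lemma fills_sym_box (P Q : {fset face}) q B n b :
  (forall f, f \in Q <-> inbox q f) -> (forall f, f \in P -> inbox B f) ->
  #|` P| = #|` Q| -> sides B = iter n rot_sides (if b then refl_sides (sides q) else sides q) ->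
  exists s t, P = [fset lattice_sym n b s t f | f in Q]%fset.
Proof.
move=> hQ hP hc hs.
set q' := iter n rot_box (if b then refl_box q else q).
have hs' : sides q' = sides B by rewrite hs sides_sym.
exists (xlo B - xlo q'), (ylo B - ylo q').
have hB : sym_box n b (xlo B - xlo q') (ylo B - ylo q') q = B.
  rewrite /sym_box -/q'; move: hs'; rewrite /sides /transl_box.
  case: B {hP hs} => a1 a2 a3 a4 a5 a6; case: q' => b1 b2 b3 b4 b5 b6.
  by unfold_box => -[e1 e2 e3 e4 e5 e6]; congr HexBox; lia.
have hI f : f \in [fset lattice_sym n b (xlo B - xlo q') (ylo B - ylo q') g | g in Q]%fset
              <-> inbox B f.
  split; first by move=> /imfsetP [g /= gQ ->]; rewrite -[X in inbox X _]hB; apply/inbox_sym/hQ.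
  have [g ->] := lattice_sym_surj n b (xlo B - xlo q') (ylo B - ylo q') f.
  by rewrite -[X in inbox X _]hB => /inbox_sym /hQ gQ; apply/imfsetP; exists g.
apply/eqP; rewrite eqEfcard; apply/andP; split.
  by apply/fsubsetP => f fP; apply/hI; exact: hP.
by rewrite card_imfset ?hc //; exact: lattice_sym_inj.
Qed.

(* For a hexagon T^d_{a,b,c} with perimeter k = 3d-a-b-c and
   area F = d^2-a^2-b^2-c^2 one has k^2 - 6F = 3e^2 + 2(p^2 + q^2 + (p+q)^2) with
   e = d-a-b-c, p = a-b, q = b-c: the perimeter is at least sqrt(6F), with equality only
   for the regular hexagon. *)
Lemma hexagon_identity (d a b c : int) :
  (3 * d - a - b - c) ^+ 2 - 6 * (d ^+ 2 - a ^+ 2 - b ^+ 2 - c ^+ 2) =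
  3 * (d - (a + b + c)) ^+ 2 + 2 * ((a - b) ^+ 2 + (b - c) ^+ 2 + ((a - b) + (b - c)) ^+ 2).
Proof. by ring. Qed.

Lemma perimeter_area_slack (K k F A Q cv : int) : 6 <= K -> 0 <= k <= K -> 0 <= Q ->
  k ^+ 2 - 6 * F = Q -> 6 * A = K ^+ 2 - cv -> cv <= 7 -> A <= F ->
  k = K /\ 6 * (F - A) = cv - Q.
Proof.
move=> hK hk hQ id hA hc hAF.
have kK : k = K.
  case: (ltrP k K) => lt; last by lia.
  have : k ^+ 2 <= (K - 1) ^+ 2 by rewrite !expr2; nia.
  by move: id hA hAF; rewrite !expr2; nia.
by split => //; subst k; move: id hA; move: (K ^+ 2) => K2; lia.
Qed.

Lemma small_squares (e p q : int) :
  3 * e ^+ 2 + 2 * (p ^+ 2 + q ^+ 2 + (p + q) ^+ 2) <= 7 ->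
  [/\ -1 <= e <= 1, -1 <= p <= 1 & -1 <= q <= 1].
Proof.
have := sqr_ge0 e; have := sqr_ge0 p; have := sqr_ge0 q; have := sqr_ge0 (p + q).
by rewrite !expr2 => h1 h2 h3 h4 h; split; nia.
Qed.

Definition qr_params (r m : nat) : nat * nat * nat * nat :=
  match m with
  | 0 => (3 * r, r, r, r)
  | 1 => (3 * r, r.-1, r, r)
  | 2 => ((3 * r).+1, r, r, r.+1)
  | 3 => ((3 * r).+1, r, r, r)
  | 4 => ((3 * r).+2, r, r.+1, r.+1)
  | _ => ((3 * r).+2, r, r, r.+1)
  end.

Lemma qrhexE r m : qrhex r m = let: (d, a, b, c) := qr_params r m in Tset d a b c.
Proof. by case: m => [|[|[|[|[|[|m]]]]]]. Qed.

Definition qr_sides (r m : nat) : sides6 :=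
  let: (d, a, b, c) := qr_params r m in hex_sides d%:Z a%:Z b%:Z c%:Z.

Definition area_defect (m : nat) : int :=
  match m with 0 => 0 | 1 => 7 | 2 => 4 | 3 => 3 | 4 => 4 | _ => 7 end.

Lemma areaA_defect (r m : nat) : (1 <= r)%N -> (m <= 5)%N ->
  6 * (areaA r m)%:Z = (6 * r%:Z + m%:Z) ^+ 2 - area_defect m.
Proof.
rewrite /areaA => hr; case: m => [|[|[|[|[|[|m]]]]]] //= _;
  rewrite ?expr2 (_ : (r ^ 2 = r * r)%N) ?mulnn //; nia.
Qed.

Ltac sides_match := rewrite /qr_sides /qr_params /hex_sides /=; congr (_, _, _, _, _, _); lia.
Ltac try_symmetry := solve
  [ exists 0%N, false; sides_match | exists 1%N, false; sides_match
  | exists 2%N, false; sides_match | exists 3%N, false; sides_match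
  | exists 4%N, false; sides_match | exists 5%N, false; sides_match
  | exists 0%N, true; sides_match | exists 1%N, true; sides_match
  | exists 2%N, true; sides_match | exists 3%N, true; sides_match
  | exists 4%N, true; sides_match | exists 5%N, true; sides_match ].

Lemma hexagon_classification (r m : nat) (d a b c : int) : (1 <= r)%N -> (m <= 5)%N ->
  0 <= a -> 0 <= b -> 0 <= c -> 0 <= d - a - b -> 0 <= d - b - c -> 0 <= d - c - a ->
  3 * d - a - b - c <= 6 * r%:Z + m%:Z ->
  (areaA r m)%:Z <= d ^+ 2 - a ^+ 2 - b ^+ 2 - c ^+ 2 ->
  exists n bb, hex_sides d a b c =
    iter n rot_sides (if bb then refl_sides (qr_sides r m) else qr_sides r m).
Proof.
move=> hr hm ha hb hc h1 h2 h3 hk hA.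
have hcv : 0 <= area_defect m <= 7 by case: m {hm hA hk} => [|[|[|[|[|[|m]]]]]].
have hQ : 0 <= 3 * (d - (a + b + c)) ^+ 2 +
    2 * ((a - b) ^+ 2 + (b - c) ^+ 2 + ((a - b) + (b - c)) ^+ 2).
  have := sqr_ge0 (d - (a + b + c)); have := sqr_ge0 (a - b); have := sqr_ge0 (b - c).
  by have := sqr_ge0 ((a - b) + (b - c)); lia.
have [kK hFA] := perimeter_area_slack (K := 6 * r%:Z + m%:Z) (k := 3 * d - a - b - c) ltac:(lia) ltac:(lia) hQ
  (hexagon_identity d a b c) (areaA_defect hr hm) ltac:(lia) hA.
have [he hp hq] := small_squares (e := d - (a + b + c)) (p := a - b) (q := b - c) ltac:(lia).
move: hFA hA; rewrite !expr2.
move: (d * d - a * a - b * b - c * c) (areaA r m)%:Z => F A hFA hA.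
move Ee: (d - (a + b + c)) hFA he => e hFA he.
move Ep: (a - b) hFA hp => p hFA hp; move Eq: (b - c) hFA hq => q hFA hq.
have [E0 E1 E2] : [/\ e = -1 \/ e = 0 \/ e = 1, p = -1 \/ p = 0 \/ p = 1 & q = -1 \/ q = 0 \/ q = 1].
  by split; lia.
clear hQ he hp hq.
case: m hm kK hk hcv hFA => [|[|[|[|[|[|m]]]]]] // _ kK hk hcv hFA;
  case: E0 => [E0|[E0|E0]]; case: E1 => [E1|[E1|E1]]; case: E2 => [E2|[E2|E2]];
  rewrite E0 E1 E2 /area_defect /= in hFA; first [ exfalso; lia | try_symmetry ].
Qed.

Lemma qr_params_facts (r m : nat) : (1 <= r)%N -> (m <= 5)%N ->
  let: (d, a, b, c) := qr_params r m in
  [/\ [&& a < d, b < d, c < d, a + b <= d, b + c <= d & c + a <= d]%N,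
      (3 * d - a - b - c = 6 * r + m)%N &
      d%:Z ^+ 2 - a%:Z ^+ 2 - b%:Z ^+ 2 - c%:Z ^+ 2 = (areaA r m)%:Z].
Proof.
move=> hr; case: m => [|[|[|[|[|[|m]]]]]] //= _; rewrite /areaA /=;
  (split; [lia | lia | rewrite !expr2 (_ : (r ^ 2 = r * r)%N) ?mulnn //; nia]).
Qed.

Lemma qrhex_props (r m : nat) : (1 <= r)%N -> (m <= 5)%N ->
  [/\ polyiamond (qrhex r m), area (qrhex r m) = areaA r m &
      (edge_perimeter (qrhex r m) <= 6 * r + m)%N].
Proof.
move=> hr hm; have := qr_params_facts hr hm; rewrite qrhexE.
case: (qr_params r m) => [[[d a] b] c] [/and5P [h1 h2 h3 h4 /andP [h5 h6]] hk hA].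
have [hpoly harea hper] := Tset_props h2 h3 h1 h4 h5 h6.
by split => //; [apply/eqP; rewrite -eqz_nat harea hA | rewrite -hk].
Qed.

Lemma qrhex_box (r m : nat) : (1 <= r)%N -> (m <= 5)%N ->
  exists q, (forall f, f \in qrhex r m <-> inbox q f) /\ sides q = qr_sides r m.
Proof.
move=> hr hm; have := qr_params_facts hr hm; rewrite qrhexE /qr_sides.
case: (qr_params r m) => [[[d a] b] c] [/and5P [h1 h2 h3 h4 _] _ _].
exists (Tbox d a b c); split; last exact: sides_Tbox.
by move=> f; apply: Tset_box; apply: ltnW.
Qed.

Lemma seq_argmin (T : eqType) (h : T -> int) (s : seq T) x0 : x0 \in s ->
  exists2 x, x \in s & forall y, y \in s -> h x <= h y.
Proof.
elim: s x0 => [|z s IH] x0 //; case: s IH => [|w s] IH _.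
  by exists z; [rewrite mem_head | move=> y; rewrite inE => /eqP ->].
have [m ms hm] := IH w (mem_head _ _).
case: (lerP (h z) (h m)) => c.
  by exists z; [exact: mem_head | move=> y; rewrite inE => /orP [/eqP -> // | /hm]; lia].
by exists m; [rewrite inE ms orbT | move=> y; rewrite inE => /orP [/eqP -> | /hm //]; lia].
Qed.

Lemma seq_argmax (T : eqType) (h : T -> int) (s : seq T) x0 : x0 \in s ->
  exists2 x, x \in s & forall y, y \in s -> h y <= h x.
Proof. by move=> /(seq_argmin (fun x => - h x)) [x xs hx]; exists x => // y /hx; lia. Qed.

Lemma bounding_box (P : {fset face}) : polyiamond P -> exists B,
  [/\ valid_box B, forall f, f \in P -> inbox B f,
      (box_perim B <= edge_perimeter P)%N & #|` P|%:Z <= box_area B].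
Proof.
move=> [/fset0Pn [f0 f0P] hconn].
have [fx0 fx0P hx0] := seq_argmin fX f0P; have [fx1 fx1P hx1] := seq_argmax fX f0P.
have [fy0 fy0P hy0] := seq_argmin fY f0P; have [fy1 fy1P hy1] := seq_argmax fY f0P.
have [fz0 fz0P hz0] := seq_argmin fZ f0P; have [fz1 fz1P hz1] := seq_argmax fZ f0P.
pose B := HexBox (fX fx0) (fX fx1) (fY fy0) (fY fy1) (fZ fz0) (fZ fz1).
have hPB f : f \in P -> inbox B f.
  move=> fP; split; apply/andP; split;
    by [exact: hx0 | exact: hx1 | exact: hy0 | exact: hy1 | exact: hz0 | exact: hz1].
have hv : valid_box B.
  have W w : w \in P -> inbox B w /\ fX w + fY w <= fZ w <= fX w + fY w + 1.
    by move=> wP; split; [apply: hPB | apply: fZ_bounds].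
  move: (W _ fx0P) (W _ fx1P) (W _ fy0P) (W _ fy1P) (W _ fz0P) (W _ fz1P); unfold_box.
  by move=> [[? ? ?] ?] [[? ? ?] ?] [[? ? ?] ?] [[? ? ?] ?] [[? ? ?] ?] [[? ? ?] ?]; lia.
have hx : xlo B <= xhi B by apply: hx1.
have hy : ylo B <= yhi B by apply: hy1.
have hz : zlo B <= zhi B by apply: hz1.
exists B; split => //; last exact: area_le_box.
apply: (box_perimeter_ge hPB hx hy hz) => -[].
- exact: (connected_meets_strips (k := DX) (B := B) hconn fx0P fx1P erefl erefl hx).
- exact: (connected_meets_strips (k := DY) (B := B) hconn fy0P fy1P erefl erefl hy).
- exact: (connected_meets_strips (k := DZ) (B := B) hconn fz0P fz1P erefl erefl hz).
Qed.

Lemma box_perim_sides B : valid_box B ->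
  (box_perim B)%:Z = 3 * (side1 B + side2 B + side3 B) - side1 B - side3 B - side5 B.
Proof. by rewrite /box_perim; unfold_box; lia. Qed.

Lemma box_classification (r m : nat) B : (1 <= r)%N -> (m <= 5)%N -> valid_box B ->
  (box_perim B <= 6 * r + m)%N -> (areaA r m)%:Z <= box_area B ->
  exists n b, sides B = iter n rot_sides (if b then refl_sides (qr_sides r m) else qr_sides r m).
Proof.
move=> hr hm hv hp hA; rewrite sides_hex.
have := box_perim_sides hv; move: hv hp hA; rewrite /box_area; unfold_box => hv hp hA hps.
by apply: hexagon_classification => //; lia.
Qed.

Theorem lemma3p17 (r m : nat) (P : {fset face}) :
  (1 <= r)%N -> (m <= 5)%N ->
  min_perimeter_polyiamond (areaA r m) P ->
  quasi_regular P.
Proof.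
move=> hr hm [hP hA hmin].
have [hQ hQA hQp] := qrhex_props hr hm.
have hPp : (edge_perimeter P <= 6 * r + m)%N := leq_trans (hmin _ hQ hQA) hQp.
have [B [hv hPB hBp hBA]] := bounding_box hP.
have hBA' : (areaA r m)%:Z <= box_area B by rewrite -hA.
have [n [b hs]] := box_classification hr hm hv (leq_trans hBp hPp) hBA'.
have [q [hq hqs]] := qrhex_box hr hm; rewrite -hqs in hs.
have hcard : #|` P| = #|` qrhex r m| by move: hA hQA; rewrite /area => -> ->.
have [s [t ->]] := fills_sym_box hq hPB hcard hs.
by exists r, m, n, b, s, t.
Qed.
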